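(* In $G=BS(1,2)$, the subgroup $\mathbb{Z}[1/2]$ has rational conjugacy growth: the series $\sum_{n\geq0}c_0(n)z^n$ is rational, where $c_0(n)$ is the number of conjugacy classes of $G$ contained in $\mathbb{Z}[1/2]$ whose length with respect to $\{a,t\}$ equals $n$.
   Context: $BS(1,2)=\langle a,t\mid tat^{-1}=a^2\rangle\cong \mathbb{Z}[1/2]\rtimes\mathbb{Z}$ via $a\mapsto(1,0)$, $t\mapsto(0,1)$, the generator of $\mathbb{Z}$ acting by multiplication by $2$; $\mathbb{Z}[1/2]=\{(x,0)\}$. The length of a conjugacy class is the minimal word length of its elements. A series is rational if it is a quotient of two polynomials with integer coefficients. *)

From mathcomp Require Import all_boot all_order all_algebra.
Set Implicit Arguments. Unset Strict Implicit. Unset Printing Implicit Defensive.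
Import Order.TTheory GRing.Theory Num.Theory.
Local Open Scope ring_scope.

(* BS(1,2) realised as Z[1/2] ⋊ Z inside rat * int:
   (x,k) * (y,l) = (x + 2^k y, k + l); a = (1,0), t = (0,1).
   The group G is the set of values of words in a, t (and inverses). *)
Definition BS := (rat * int)%type.

Definition bs_mul (g h : BS) : BS := (g.1 + (2%:Q ^ g.2) * h.1, g.2 + h.2).
Definition bs_inv (g : BS) : BS := (- ((2%:Q ^ (- g.2)) * g.1), - g.2).

Inductive gen := GA | GAinv | GT | GTinv.

Definition gen_val (s : gen) : BS :=
  match s with
  | GA => (1, 0) | GAinv => (-1, 0) | GT => (0, 1) | GTinv => (0, -1)
  end.

Definition eval (w : seq gen) : BS := foldr (fun s g => bs_mul (gen_val s) g) (0, 0) w.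

Definition bs_conj (g h : BS) : Prop :=
  exists u : seq gen, h = bs_mul (bs_mul (eval u) g) (bs_inv (eval u)).

Definition conj_class (g : BS) : BS -> Prop := bs_conj g.

Definition class_length (g : BS) (n : nat) : Prop :=
  (exists w : seq gen, size w = n /\ bs_conj g (eval w)) /\
  (forall w : seq gen, bs_conj g (eval w) -> (n <= size w)%N).

Definition classes_in_Z2_of_length (n : nat) (C : BS -> Prop) : Prop :=
  exists w : seq gen, C = conj_class (eval w) /\
    (forall h, C h -> h.2 = 0) /\ class_length (eval w) n.

Definition has_card (T : Type) (A : T -> Prop) (k : nat) : Prop :=
  exists f : 'I_k -> T, injective f /\ (forall x, A x <-> exists i, f i = x).

(* the series sum_n c(n) z^n is a quotient P/Q of integer polynomials,
   i.e. Q * (sum c(n) z^n) = P as formal power series, with Q <> 0 *)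
Definition rational_series (c : nat -> nat) : Prop :=
  exists P Q : {poly int}, Q != 0 /\
    forall n : nat, \sum_(i < n.+1) Q`_i * (c (n - i)%N)%:Z = P`_n.

(* An element of G lies in Z[1/2] iff its t-exponent sum is 0, and its
   conjugacy class is {2^k x | k in Z}; so every such class contains exactly one
   integer m that is 0 or odd.  A word of t-exponent sum 0 whose partial t-sums
   range over an interval of width H has at least 2H letters t^{+-1}, and, read
   from the bottom of that interval, its value is a sum of one term +-2^h
   (0 <= h <= H) per letter a^{+-1}.  Hence the class of m has length
   clen m = min_H (2H + acost m H), acost m H being the least number of such
   terms, and the minimum is attained by an explicit word.  For n >= 10,
   sorting the odd m of length n by their residue mod 8 gives a bijection with
   one copy of the odd numbers of length n - 2 (4q +- 1 |-> 8q +- 1) and two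
   copies of those of length n - 5 (m |-> 4m - 1, 4m + 1).  Thus
   c0 n = c0 (n - 2) + 2 c0 (n - 5) for n >= 10, and the series is
   P / (1 - z^2 - 2 z^5). *)

From mathcomp Require Import all_boot all_order all_algebra.
From mathcomp Require Import zify ring.
From Stdlib Require Import FunctionalExtensionality PropExtensionality.
Set Implicit Arguments. Unset Strict Implicit. Unset Printing Implicit Defensive.
Import Order.TTheory GRing.Theory Num.Theory.
Local Open Scope ring_scope.

(** * Signed binary expansions *)

Definition oddz (m : int) : bool := (m %% 2)%Z == 1.

(* The least number of summands +-2^h, 0 <= h <= H, adding up to m. *)
Fixpoint acost (m : int) (H : nat) : nat :=
  match H with
  | 0 => absz m
  | H'.+1 => if (m %% 2)%Z == 0 then acost (m %/ 2)%Z H'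
             else (minn (acost ((m - 1) %/ 2)%Z H') (acost ((m + 1) %/ 2)%Z H')).+1
  end.

Lemma acostH0 m : acost m 0 = absz m.
Proof. by []. Qed.

Lemma int_parity (m : int) : exists q, m = 2 * q \/ m = 2 * q + 1.
Proof. by exists (m %/ 2)%Z; lia. Qed.

Lemma acost_even q H : acost (2 * q) H.+1 = acost q H.
Proof.
rewrite /=; have -> : ((2 * q) %% 2)%Z == 0 by apply/eqP; lia.
by have -> : ((2 * q) %/ 2)%Z = q by lia.
Qed.

Lemma acost_odd q H :
  acost (2 * q + 1) H.+1 = (minn (acost q H) (acost (q + 1) H)).+1.
Proof.
rewrite /=; have -> : ((2 * q + 1) %% 2)%Z == 0 = false by apply/eqP; lia.
have -> : ((2 * q + 1 - 1) %/ 2)%Z = q by lia.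
by have -> : ((2 * q + 1 + 1) %/ 2)%Z = q + 1 by lia.
Qed.

Lemma acost0 H : acost 0 H = 0%N.
Proof. by elim: H => [//|H IH]; rewrite -(mulr0 2) acost_even. Qed.

Lemma acostN m H : acost (- m) H = acost m H.
Proof.
elim: H m => [|H IH] m; first by rewrite /= abszN.
have [q [->|->]] := int_parity m.
  by rewrite -mulrN !acost_even IH.
have -> : - (2 * q + 1) = 2 * (- q - 1) + 1 by lia.
rewrite !acost_odd (_ : - q - 1 + 1 = - q); last by lia.
by rewrite (_ : - q - 1 = - (q + 1)); [rewrite !IH minnC | lia].
Qed.

Lemma acost_addX H h m : (h <= H)%N ->
  (acost (m + 2 ^+ h) H <= (acost m H).+1)%N /\
  (acost (m - 2 ^+ h) H <= (acost m H).+1)%N.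
Proof.
elim: H h m => [|H IH] h m hH.
  by rewrite (_ : h = 0%N) /=; lia.
have [q [->|->]] := int_parity m; case: h hH => [|h] hH.
- rewrite expr0 (_ : 2 * q - 1 = 2 * (q - 1) + 1); last by lia.
  by rewrite !acost_odd acost_even (_ : q - 1 + 1 = q); lia.
- by rewrite exprS -mulrDr -mulrBr !acost_even; apply: IH.
- rewrite expr0 (_ : 2 * q + 1 + 1 = 2 * (q + 1)); last by lia.
  rewrite (_ : 2 * q + 1 - 1 = 2 * q); last by lia.
  rewrite !acost_odd !acost_even.
  have := IH 0%N q (leq0n _); have := IH 0%N (q + 1) (leq0n _).
  by rewrite expr0 addrK; lia.
- rewrite exprS (_ : 2 * q + 1 + 2 * 2 ^+ h = 2 * (q + 2 ^+ h) + 1); last by lia.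
  rewrite (_ : 2 * q + 1 - 2 * 2 ^+ h = 2 * (q - 2 ^+ h) + 1); last by lia.
  rewrite !acost_odd (_ : q + 2 ^+ h + 1 = q + 1 + 2 ^+ h); last by lia.
  rewrite (_ : q - 2 ^+ h + 1 = q + 1 - 2 ^+ h); last by lia.
  by have := IH h q hH; have := IH h (q + 1) hH; lia.
Qed.

Lemma abs_le_acost m H : (absz m <= acost m H * 2 ^ H)%N.
Proof.
elim: H m => [|H IH] m; first by rewrite muln1.
have [q [->|->]] := int_parity m.
  by rewrite acost_even expnS; have := IH q; lia.
rewrite acost_odd expnS; have := IH q; have := IH (q + 1).
by have := expn_gt0 2 H; case: (leqP (acost q H) (acost (q + 1) H)); nia.
Qed.

Lemma acost_4p1 q H : acost (4 * q + 1) H.+2 = (acost q H).+1.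
Proof.
rewrite (_ : 4 * q + 1 = 2 * (2 * q) + 1); last by lia.
rewrite acost_odd acost_even acost_odd.
by have [_] := acost_addX (q + 1) (leq0n H); rewrite expr0 addrK; lia.
Qed.

(* [clen m] is the least value of 2H + acost m H; heights H > |m| never
   matter since already acost m 0 = |m|. *)
Fixpoint clen_upto (m : int) (K : nat) : nat :=
  if K is K'.+1 then minn (clen_upto m K') (2 * K + acost m K)%N else absz m.

Definition clen (m : int) : nat := clen_upto m (absz m).

Lemma clen_uptoS m K :
  clen_upto m K.+1 = minn (clen_upto m K) (2 * K.+1 + acost m K.+1).
Proof. by []. Qed.

Lemma clen_le m H : (clen m <= 2 * H + acost m H)%N.
Proof.
have le_upto K H' : (H' <= K)%N -> (clen_upto m K <= 2 * H' + acost m H')%N.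
  elim: K => [|K IH]; first by rewrite leqn0 => /eqP ->.
  by rewrite clen_uptoS leq_eqVlt ltnS => /orP [/eqP ->|/IH]; lia.
rewrite /clen; case: (leqP H (absz m)) => [/le_upto //|?].
by have /= := le_upto (absz m) 0%N (leq0n _); lia.
Qed.

Lemma clen_ex m : exists H, clen m = (2 * H + acost m H)%N.
Proof.
rewrite /clen; elim: (absz m) => [|K [H IH]]; first by exists 0%N.
rewrite clen_uptoS.
by case: (leqP (clen_upto m K) (2 * K.+1 + acost m K.+1)) => ?;
  [exists H | exists K.+1]; lia.
Qed.

Lemma clen_le_abs m : (clen m <= absz m)%N.
Proof. exact: clen_le m 0. Qed.

Lemma clenN m : clen (- m) = clen m.
Proof.
apply/eqP; rewrite eqn_leq; apply/andP; split.
  by have [H ->] := clen_ex m; rewrite -acostN clen_le.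
by have [H ->] := clen_ex (- m); rewrite acostN clen_le.
Qed.

Lemma clen_le_mul2X j m H : (clen m <= 2 * H + acost (2 ^+ j * m) H)%N.
Proof.
elim: j H => [|j IH] H; first by rewrite expr0 mul1r clen_le.
case: H => [|H]; last by rewrite exprS -mulrA acost_even; have := IH H; lia.
have := clen_le_abs m; have : 0 < 2 ^+ j :> int by rewrite exprn_gt0.
rewrite acostH0 exprS; nia.
Qed.

Lemma abs_le_clen m : (absz m <= clen m * 2 ^ clen m)%N.
Proof.
have [H eH] := clen_ex m; have := abs_le_acost m H.
have : (2 ^ H <= 2 ^ clen m)%N by rewrite leq_exp2l //; lia.
by nia.
Qed.

Lemma clen_4p1 m : 3 <= `|m| -> clen (4 * m + 1) = (clen m + 5)%N.
Proof.
move=> m_ge3; apply/eqP; rewrite eqn_leq; apply/andP; split.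
  by have [H ->] := clen_ex m; have := clen_le (4 * m + 1) H.+2; rewrite acost_4p1; lia.
have [H ->] := clen_ex (4 * m + 1); have := clen_le_abs m.
case: H => [|[|H]]; last by rewrite acost_4p1; have := clen_le m H; lia.
  by rewrite acostH0; lia.
by rewrite (_ : 4 * m + 1 = 2 * (2 * m) + 1) ?acost_odd ?acostH0; lia.
Qed.

Lemma clen_8p1_small :
  [seq q <- [seq k%:Z - 8 | k <- iota 0 17] |
     (8 <= `|4 * q + 1|) && (clen (8 * q + 1) != (clen (4 * q + 1) + 2)%N)] = [::].
Proof. by vm_compute. Qed.

Lemma acost1_le q : (2 * acost q 1 <= absz q + 2)%N.
Proof.
by have [r [->|->]] := int_parity q; rewrite ?acost_even ?acost_odd !acostH0; lia.
Qed.

Lemma clen_8p1 q : 8 <= `|4 * q + 1| -> clen (8 * q + 1) = (clen (4 * q + 1) + 2)%N.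
Proof.
move=> hq; case: (ltP `|q| 9) => [q_small|q_big].
  apply/eqP; apply: contraT => ne.
  have q_win : q \in [seq k%:Z - 8 | k <- iota 0 17].
    by apply/mapP; exists (absz (q + 8)); [rewrite mem_iota|]; lia.
  have : q \in [::] by rewrite -clen_8p1_small mem_filter /= hq ne q_win.
  by rewrite in_nil.
(* For |q| >= 9, heights below 2 (resp. 3) are too costly for 4q + 1 (resp.
   8q + 1), and above them acost_8p1 matches the two minimisations. *)
have acost_8p1 H : acost (8 * q + 1) H.+3 = acost (4 * q + 1) H.+2.
  by rewrite (_ : 8 * q + 1 = 4 * (2 * q) + 1) ?acost_4p1 ?acost_even; lia.
have small_q := acost1_le q.
have clen_4p1_le : (clen (4 * q + 1) <= 7 + acost q 1)%N.
  by have := clen_le (4 * q + 1) 3; rewrite acost_4p1.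
apply/eqP; rewrite eqn_leq; apply/andP; split.
  have [[|[|H]] e] := clen_ex (4 * q + 1).
  - by move: e; rewrite acostH0; lia.
  - have e41 : 4 * q + 1 = 2 * (2 * q) + 1 by lia.
    by move: e; rewrite [in acost _ 1]e41 acost_odd !acostH0; lia.
  - by have := clen_le (8 * q + 1) H.+3; rewrite acost_8p1; lia.
have [[|[|[|H]]] ->] := clen_ex (8 * q + 1).
- by rewrite acostH0; lia.
- by rewrite (_ : 8 * q + 1 = 2 * (4 * q) + 1) ?acost_odd ?acostH0; lia.
- by rewrite (_ : 8 * q + 1 = 4 * (2 * q) + 1) ?acost_4p1 ?acostH0; lia.
- by rewrite acost_8p1; have := clen_le (4 * q + 1) H.+2; lia.
Qed.

Lemma clen_4m1 m : 3 <= `|m| -> clen (4 * m - 1) = (clen m + 5)%N.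
Proof.
move=> m_ge3; rewrite -clenN (_ : - (4 * m - 1) = 4 * - m + 1); last by lia.
by rewrite clen_4p1 ?clenN ?normrN.
Qed.

Definition phi (m : int) : int := if (m %% 4)%Z == 1 then 2 * m - 1 else 2 * m + 1.

Lemma clen_phi m : oddz m -> 8 <= `|m| -> clen (phi m) = (clen m + 2)%N.
Proof.
rewrite /oddz /phi => /eqP m_odd m_big; case: ifP => /eqP m_mod4.
  rewrite (_ : m = 4 * (m %/ 4)%Z + 1) in m_big *; last by lia.
  by rewrite -clen_8p1 //; congr clen; lia.
rewrite (_ : m = - (4 * - ((m + 1) %/ 4)%Z + 1)) in m_big *; last by lia.
rewrite normrN in m_big; rewrite clenN -clen_8p1 // -clenN; congr clen; lia.
Qed.

(** * Words in a and t *)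

Lemma bs_mulA g h k : bs_mul (bs_mul g h) k = bs_mul g (bs_mul h k).
Proof.
case: g h k => [g1 g2] [h1 h2] [k1 k2]; rewrite /bs_mul /=.
by rewrite expfzDr // mulrDr addrA mulrA addrA.
Qed.

Lemma bs_mul0g g : bs_mul (0, 0) g = g.
Proof. by case: g => [g1 g2]; rewrite /bs_mul /= expr0z mul1r !add0r. Qed.

Lemma eval_cons s w : eval (s :: w) = bs_mul (gen_val s) (eval w).
Proof. by []. Qed.

Lemma eval_cat u v : eval (u ++ v) = bs_mul (eval u) (eval v).
Proof. by elim: u => [|s u IH] /=; rewrite ?bs_mul0g // IH bs_mulA. Qed.

Definition tdelta (s : gen) : int := match s with GT => 1 | GTinv => -1 | _ => 0 end.

Definition tsum (w : seq gen) : int := \sum_(s <- w) tdelta s.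

Lemma tsum_cons s w : tsum (s :: w) = tdelta s + tsum w.
Proof. exact: big_cons. Qed.

Lemma eval_snd w : (eval w).2 = tsum w.
Proof.
by elim: w => [|s w IH]; rewrite ?tsum_cons /= -?IH; [rewrite /tsum big_nil | case: s].
Qed.

Lemma bs_conj_formula y k x :
  bs_mul (bs_mul (y, k) (x, 0)) (bs_inv (y, k)) = (2%:Q ^ k * x, 0).
Proof.
rewrite /bs_mul /bs_inv /= !addr0 subrr mulrN mulrA -expfzDr // subrr expr0z mul1r.
by rewrite addrAC subrr add0r.
Qed.

Definition tpow (k : int) : seq gen := nseq (absz k) (if 0 <= k then GT else GTinv).

Lemma eval_tpow k : (eval (tpow k)).2 = k.
Proof.
have tsum_nseq n s : tsum (nseq n s) = n%:Z * tdelta s.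
  by elim: n => [|n IH]; [rewrite /tsum big_nil | rewrite /= tsum_cons IH]; lia.
by rewrite eval_snd tsum_nseq; case: ifP => /=; lia.
Qed.

Lemma bs_conj_Z2 x h : bs_conj (x, 0) h <-> exists k : int, h = (2%:Q ^ k * x, 0).
Proof.
split=> [[u ->]|[k ->]]; first by case: (eval u) => y k; exists k; rewrite bs_conj_formula.
exists (tpow k); have := eval_tpow k.
by case: (eval (tpow k)) => y k' /= ->; rewrite bs_conj_formula.
Qed.

Definition apow (m : int) : seq gen := nseq (absz m) (if 0 <= m then GA else GAinv).

Lemma eval_apow m : eval (apow m) = (m%:~R, 0).
Proof.
have eval_nseq n s e : gen_val s = (e%:~R, 0) -> eval (nseq n s) = ((n%:Z * e)%:~R, 0).
  move=> se; elim: n => [|n IH] /=; first by rewrite mul0r.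
  rewrite IH se /bs_mul /= expr0z mul1r addr0 -intrD; congr (_%:~R, _); lia.
rewrite /apow; case: ifP => m_ge0;
  [rewrite (eval_nseq _ _ 1) | rewrite (eval_nseq _ _ (-1))] => //; congr (_%:~R, _); lia.
Qed.

Lemma eval_wrapT w q : eval w = (q, 0) -> eval (GT :: rcons w GTinv) = (2%:Q * q, 0).
Proof.
move=> e; rewrite -cats1 /= eval_cat e /bs_mul /= !expr0z !mul1r !expr1z.
by rewrite mulr0 !addr0 add0r.
Qed.

Fixpoint word_of (m : int) (H : nat) : seq gen :=
  if H is H'.+1 then
    if (m %% 2)%Z == 0 then GT :: rcons (word_of (m %/ 2)%Z H') GTinv
    else if (acost ((m - 1) %/ 2)%Z H' <= acost ((m + 1) %/ 2)%Z H')%N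
    then GA :: GT :: rcons (word_of ((m - 1) %/ 2)%Z H') GTinv
    else GAinv :: GT :: rcons (word_of ((m + 1) %/ 2)%Z H') GTinv
  else apow m.

Lemma word_ofP H m :
  eval (word_of m H) = (m%:~R, 0) /\ size (word_of m H) = (2 * H + acost m H)%N.
Proof.
elim: H m => [|H IH] m; first by rewrite eval_apow size_nseq.
rewrite [word_of _ _]/=; case: ifP => /eqP m_mod2.
  have [e s] := IH (m %/ 2)%Z; rewrite (eval_wrapT e) [size _]/= size_rcons s.
  have -> : acost m H.+1 = acost (m %/ 2)%Z H.
    by rewrite -[RHS]acost_even; congr acost; lia.
  by split; [rewrite -intrM; congr (_%:~R, _) |]; lia.
have m_odd : m = 2 * ((m - 1) %/ 2)%Z + 1 by lia.
have m_odd' : m = 2 * ((m + 1) %/ 2)%Z - 1 by lia.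
have acost_m :
    acost m H.+1 = (minn (acost ((m - 1) %/ 2)%Z H) (acost ((m + 1) %/ 2)%Z H)).+1.
  by rewrite {1}m_odd acost_odd; congr (minn _ (acost _ _)).+1; lia.
case: ifP => le_cost; rewrite [size _]/= size_rcons acost_m eval_cons.
  have [e ->] := IH ((m - 1) %/ 2)%Z; rewrite (eval_wrapT e) /bs_mul /= expr0z mul1r.
  by split; [rewrite [in RHS]m_odd [in RHS]intrD [in RHS]intrM addrC addr0 | lia].
have [e ->] := IH ((m + 1) %/ 2)%Z; rewrite (eval_wrapT e) /bs_mul /= expr0z mul1r.
by split; [rewrite [in RHS]m_odd' [in RHS]intrB [in RHS]intrM addrC addr0 | lia].
Qed.

(** * Lower bound on the length of a word *)

Definition tletter (s : gen) : bool := tdelta s != 0.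

Fixpoint tmin (w : seq gen) (h : int) : int :=
  if w is s :: w' then Num.min h (tmin w' (h + tdelta s)) else h.

Fixpoint tmax (w : seq gen) (h : int) : int :=
  if w is s :: w' then Num.max h (tmax w' (h + tdelta s)) else h.

Lemma tmin_tmax w h :
  [/\ tmin w h <= h <= tmax w h & tmin w h <= h + tsum w <= tmax w h].
Proof.
elim: w h => [|s w IH] h /=; first by rewrite /tsum big_nil; lia.
by have [] := IH (h + tdelta s); rewrite tsum_cons; split; lia.
Qed.

Lemma tspan_le w h : 2 * (tmax w h - tmin w h) <= (count tletter w)%:Z + `|tsum w|.
Proof.
elim: w h => [|s w IH] h /=; first by rewrite /tsum big_nil; lia.
have := IH (h + tdelta s); have [] := tmin_tmax w (h + tdelta s).
by rewrite tsum_cons /tletter; case: s => /=; lia.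
Qed.

(* Read from base height lo, an a-letter at height h' contributes +-2^(h' - lo). *)
Lemma eval_acost w h lo H : lo <= tmin w h -> tmax w h <= lo + H%:Z ->
  exists N : int, 2%:Q ^ (h - lo) * (eval w).1 = N%:~R /\
                  (acost N H <= count (predC tletter) w)%N.
Proof.
elim: w h => [|s w IH] h; rewrite [tmin _ _]/= [tmax _ _]/=.
  by move=> _ _; exists 0; rewrite mulr0 acost0.
move=> lo_min max_hi; have [N [eN cN]] := IH (h + tdelta s) ltac:(lia) ltac:(lia).
have [e he] : exists e : nat, h - lo = e%:Z by exists (absz (h - lo)); lia.
have e_le : (e <= H)%N by lia.
have [addX subX] := acost_addX N e_le.
rewrite eval_cons; case: s eN {lo_min max_hi} => /= eN; rewrite /bs_mul /=.
- exists (N + 2 ^+ e); split; last by apply: leq_trans addX _; rewrite /=; lia.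
  rewrite addr0 in eN; rewrite expr0z mul1r mulrDr mulr1 eN intrD addrC he.
  by rewrite rmorphXn.
- exists (N - 2 ^+ e); split; last by apply: leq_trans subX _; rewrite /=; lia.
  rewrite addr0 in eN; rewrite expr0z mul1r mulrDr mulrN1 eN intrB addrC he.
  by rewrite rmorphXn.
- exists N; split => //; rewrite -eN add0r mulrA -expfzDr //; congr (_ ^ _ * _); lia.
- exists N; split => //; rewrite -eN add0r mulrA -expfzDr //; congr (_ ^ _ * _); lia.
Qed.

Lemma mul2X_odd_int (m N j : int) : oddz m -> 2%:Q ^ j * m%:~R = N%:~R ->
  exists p : nat, j = p%:Z /\ N = 2 ^+ p * m.
Proof.
rewrite /oddz => /eqP m_odd; case: j => p e.
  by exists p; split => //; apply: (@intr_inj rat); rewrite intrM rmorphXn.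
have : (m%:~R : rat) = (2 ^+ p.+1 * N)%:~R.
  by rewrite intrM rmorphXn -e mulrA mulfV ?mul1r // expf_neq0.
by move/intr_inj; rewrite exprS -mulrA; lia.
Qed.

Lemma clen_le_size w m k : oddz m -> eval w = (2%:Q ^ k * m%:~R, 0) -> (clen m <= size w)%N.
Proof.
move=> m_odd ew; have tsum0 : tsum w = 0 by rewrite -eval_snd ew.
have [zero_in_span _] := tmin_tmax w 0.
have [H eH] : exists H : nat, tmax w 0 - tmin w 0 = H%:Z.
  by exists (absz (tmax w 0 - tmin w 0)); lia.
have [N [eN cN]] := @eval_acost w 0 (tmin w 0) H (lexx _) ltac:(lia).
rewrite ew /= mulrA -expfzDr // in eN; have [p [_ eNp]] := mul2X_odd_int m_odd eN.
have := tspan_le w 0; have := clen_le_mul2X p m H.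
by rewrite -eNp -(count_predC tletter w) tsum0; lia.
Qed.

(** * Conjugacy classes inside Z[1/2] *)

(* Each conjugacy class of G inside Z[1/2] contains exactly one reduced integer. *)
Definition reduced (m : int) : bool := (m == 0) || oddz m.

Lemma eval_dyadic w : exists (N : int) (e : nat), (eval w).1 * 2%:Q ^+ e = N%:~R.
Proof.
elim: w => [|s w [N [e IH]]]; first by exists 0, 0%N; rewrite mul0r.
rewrite eval_cons /bs_mul; case: s => /=.
- by exists (2 ^+ e + N), e; rewrite expr0z mul1r mulrDl IH mul1r [RHS]intrD rmorphXn.
- by exists (N - 2 ^+ e), e; rewrite expr0z mul1r mulrDl IH mulN1r [RHS]intrB rmorphXn addrC.
- by exists (2 * N), e; rewrite add0r expr1z -mulrA IH [RHS]intrM.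
- by exists N, e.+1; rewrite add0r exprN1 exprS -IH; field.
Qed.

Lemma odd_part (N : int) : N != 0 -> exists (v : nat) (m : int), N = 2 ^+ v * m /\ oddz m.
Proof.
elim: {N}(absz N) {-2}N (leqnn (absz N)) => [|n IH] N N_le N_neq0; first by lia.
case N_odd: (oddz N); first by exists 0%N, N; rewrite expr0 mul1r.
move: N_odd; rewrite /oddz => /negbT N_even.
have [v [m [eN m_odd]]] := IH (N %/ 2)%Z ltac:(lia) ltac:(lia).
by exists v.+1, m; split => //; rewrite exprS -mulrA -eN; lia.
Qed.

Lemma eval_Z2 w : (eval w).2 = 0 ->
  exists m k : int, eval w = (2%:Q ^ k * m%:~R, 0) /\ reduced m.
Proof.
have [N [e eN]] := eval_dyadic w; case: (eval w) eN => x y /= eN ->.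
have -> : x = 2%:Q ^ (- e%:Z) * N%:~R by rewrite -eN -exprnN mulrC mulfK ?expf_neq0.
have [/eqP ->|N_neq0] := boolP (N == 0); first by exists 0, 0; rewrite !mulr0.
have [v [m [-> m_odd]]] := odd_part N_neq0.
exists m, (v%:Z - e%:Z); split; last by rewrite /reduced m_odd orbT.
by rewrite intrM rmorphXn mulrA exprnP -expfzDr // addrC.
Qed.

Lemma reduced_mul2X_inj (m m' k : int) : reduced m -> reduced m' ->
  2%:Q ^ k * m%:~R = m'%:~R -> m = m'.
Proof.
case/orP => [/eqP ->|m_odd] m'_red e.
  by move: e; rewrite mulr0 => /esym /eqP; rewrite intr_eq0 => /eqP.
have [[|p] [_ em']] := mul2X_odd_int m_odd e; first by rewrite em' expr0 mul1r.
have : 0 < 2 ^+ p :> int by rewrite exprn_gt0.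
by move: m_odd m'_red; rewrite /reduced /oddz em' exprS -mulrA => /eqP ? /orP [] /eqP; nia.
Qed.

Lemma bs_conj_refl g : bs_conj g g.
Proof.
exists [::]; rewrite /= bs_mul0g; case: g => x e.
by rewrite /bs_mul /bs_inv /=; congr pair; [ring | lia].
Qed.

Lemma conj_class_mul2X x k : conj_class (2%:Q ^ k * x, 0) = conj_class (x, 0).
Proof.
apply: functional_extensionality => h; apply: propositional_extensionality.
rewrite /conj_class !bs_conj_Z2; split=> [[k' ->]|[k' ->]].
  by exists (k' + k); rewrite expfzDr // mulrA.
by exists (k' - k); rewrite mulrA -expfzDr // subrK.
Qed.

Lemma class_length_conj_class g g' n :
  conj_class g = conj_class g' -> class_length g n -> class_length g' n.
Proof.
move=> E [[w [sw cw]] min_n]; split=> [|w' cw'].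
  by exists w; split=> //; change (conj_class g' (eval w)); rewrite -E.
by apply: min_n; change (conj_class g (eval w')); rewrite E.
Qed.

Lemma class_length_uniq g n n' : class_length g n -> class_length g n' -> n = n'.
Proof.
move=> [[w [<- conj_w]] min_n] [[w' [<- conj_w']] min_n'].
by apply/eqP; rewrite eqn_leq min_n // min_n'.
Qed.

Lemma class_length_reduced m : reduced m -> class_length (m%:~R, 0) (clen m).
Proof.
case/orP => [/eqP ->|m_odd].
  by split=> // ; exists [::]; split => //; apply: bs_conj_refl.
split=> [|w /bs_conj_Z2 [k ew]]; last exact: clen_le_size m_odd ew.
have [H eH] := clen_ex m; have [ew sw] := word_ofP H m.
by exists (word_of m H); rewrite ew sw eH; split; last exact: bs_conj_refl.
Qed.

(** * Counting the classes of a given length *)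

(* The range is large enough by abs_le_clen. *)
Definition reps (n : nat) : seq int :=
  let B := (n * 2 ^ n)%N in
  [seq m <- [seq k%:Z - B%:Z | k <- iota 0 (2 * B).+1] | reduced m && (clen m == n)].

Lemma mem_reps n m : (m \in reps n) = reduced m && (clen m == n).
Proof.
rewrite mem_filter andb_idr // => /andP [_ /eqP <-].
have := abs_le_clen m; set B := (clen m * 2 ^ clen m)%N => m_le.
by apply/mapP; exists (absz (m + B%:Z)); rewrite ?mem_iota; lia.
Qed.

Lemma reps_uniq n : uniq (reps n).
Proof. by rewrite filter_uniq // map_inj_uniq ?iota_uniq // => k k'; lia. Qed.

Lemma reps_odd n m : (0 < n)%N -> m \in reps n -> oddz m /\ clen m = n.
Proof.
rewrite mem_reps => n_gt0 /andP [/orP [/eqP m0 | ?] /eqP clen_m] //.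
by move: n_gt0; rewrite -clen_m m0.
Qed.

Definition reps_split (n : nat) : seq int :=
  [seq phi m | m <- reps (n - 2)%N] ++
  [seq 4 * m - 1 | m <- reps (n - 5)%N] ++ [seq 4 * m + 1 | m <- reps (n - 5)%N].

(* The three parts land in the odd residues +-1, 3 and 5 modulo 8 respectively. *)
Lemma reps_split_uniq n : (5 < n)%N -> uniq (reps_split n).
Proof.
move=> n_gt5; have odd_at k : (0 < k)%N -> forall m, m \in reps k -> (m %% 2)%Z = 1.
  by move=> k_gt0 m /(reps_odd k_gt0) [/eqP].
have odd2 := odd_at (n - 2)%N ltac:(lia); have odd5 := odd_at (n - 5)%N ltac:(lia).
rewrite !cat_uniq [uniq [seq phi _ | _ <- _]]map_inj_in_uniq; last first.
  by move=> m m' /odd2 ? /odd2 ?; rewrite /phi; do 2 case: ifP => /eqP ?; lia.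
rewrite !map_inj_uniq ?reps_uniq /= ?andbT; try by move=> m m'; lia.
rewrite has_cat negb_or -andbA; apply/and3P; split.
- apply/hasPn => _ /mapP [m /odd5 ? ->]; apply/negP => /mapP [m' /odd2 ?].
  by rewrite /phi; case: ifP => /eqP ?; lia.
- apply/hasPn => _ /mapP [m /odd5 ? ->]; apply/negP => /mapP [m' /odd2 ?].
  by rewrite /phi; case: ifP => /eqP ?; lia.
- apply/hasPn => _ /mapP [m /odd5 ? ->]; apply/negP => /mapP [m' /odd5 ?]; lia.
Qed.

(* |x| = 15 is excluded as 15 = phi 7 and -15 = phi (-7), where clen_phi fails. *)
Lemma odd_cases x : oddz x -> 10 <= `|x| -> `|x| != 15 ->
  [\/ exists2 m, oddz m /\ 8 <= `|m| & x = phi m,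
      exists2 m, oddz m /\ 3 <= `|m| & x = 4 * m - 1 |
      exists2 m, oddz m /\ 3 <= `|m| & x = 4 * m + 1].
Proof.
rewrite /oddz /phi => /eqP x_odd x_big x_ne15.
have [x1|[x3|[x5|x7]]] :
  (x %% 8)%Z = 1 \/ (x %% 8)%Z = 3 \/ (x %% 8)%Z = 5 \/ (x %% 8)%Z = 7 by lia.
- apply: Or31; exists ((x + 1) %/ 2)%Z; first by split; [apply/eqP|]; lia.
  by rewrite ifT; [lia | apply/eqP; lia].
- by apply: Or32; exists ((x + 1) %/ 4)%Z; first split; [apply/eqP|..]; lia.
- by apply: Or33; exists ((x - 1) %/ 4)%Z; first split; [apply/eqP|..]; lia.
- apply: Or31; exists ((x - 1) %/ 2)%Z; first by split; [apply/eqP|]; lia.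
  by rewrite ifF; [lia | apply/eqP; lia].
Qed.

Lemma clen15 : (clen 15 <= 9)%N.
Proof. exact: clen_le 15 3. Qed.

Lemma mem_reps_split n : (10 <= n)%N -> reps n =i reps_split n.
Proof.
move=> n_ge10 x; have n_gt0 : (0 < n)%N by lia.
have red m : oddz m -> reduced m by move=> ?; apply/orP; right.
rewrite /reps_split !mem_cat; apply/idP/idP.
  move=> /(reps_odd n_gt0) [x_odd clen_x].
  have x_big : 10 <= `|x| by have := clen_le_abs x; lia.
  have x_ne15 : `|x| != 15.
    apply: contraTneq clen15 => /eqP; rewrite eqr_norml => /andP [/orP [] /eqP e _].
      by rewrite -e clen_x; lia.
    by rewrite -clenN -e clen_x; lia.
  case: (odd_cases x_odd x_big x_ne15) => [] [m [m_odd m_big] ex];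
    rewrite ex ?clen_phi ?clen_4m1 ?clen_4p1 // in clen_x; apply/or3P;
    [constructor 1 | constructor 2 | constructor 3]; apply/mapP; exists m => //;
    by rewrite mem_reps red //=; lia.
have odd_phi m : oddz m -> oddz (phi m).
  by rewrite /oddz /phi => /eqP ?; case: ifP => _; apply/eqP; lia.
have odd_4 m c : oddz (4 * m + c) = oddz c by rewrite /oddz; apply/eqP/eqP; lia.
case/or3P => /mapP [m m_rep ->]; have [|m_odd clen_m] := reps_odd _ m_rep; try lia;
  have m_le := clen_le_abs m; rewrite mem_reps red ?odd_phi ?odd_4 //=.
- by rewrite clen_phi //; lia.
- by rewrite clen_4m1; lia.
- by rewrite clen_4p1; lia.
Qed.

Definition c0 (n : nat) : nat := size (reps n).

Lemma c0_rec n : (10 <= n)%N -> c0 n = (c0 (n - 2) + 2 * c0 (n - 5))%N.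
Proof.
move=> n_ge10; have n_gt5 : (5 < n)%N by lia.
have := uniq_perm (reps_uniq n) (reps_split_uniq n_gt5) (mem_reps_split n_ge10).
by rewrite /c0 => /perm_size ->; rewrite /reps_split !size_cat !size_map addnn -mul2n.
Qed.

Lemma has_card_seq (X : eqType) (T : Type) (s : seq X) (g : X -> T) (A : T -> Prop) :
  uniq s -> {in s &, injective g} -> (forall a, A a <-> exists2 x, x \in s & g x = a) ->
  has_card A (size s).
Proof.
move=> s_uniq g_inj A_s; exists (fun i => g (tnth (in_tuple s) i)); split.
  have tnth_inj : injective (tnth (in_tuple s)) by apply/tuple_uniqP.
  by move=> i j /g_inj eq_ij; apply/tnth_inj/eq_ij; apply: mem_tnth.
move=> a; rewrite A_s; split=> [[x x_s <-]|[i <-]].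
  have x_idx : (index x s < size s)%N by rewrite index_mem.
  by exists (Ordinal x_idx); rewrite (tnth_nth x) nth_index.
by exists (tnth (in_tuple s) i); rewrite ?mem_tnth.
Qed.

Lemma classes_in_Z2_of_lengthP n C : classes_in_Z2_of_length n C <->
  exists2 m, m \in reps n & conj_class (m%:~R, 0) = C.
Proof.
split=> [[w [-> [in_Z2 len_w]]]|[m]].
  have [m [k [ew m_red]]] := eval_Z2 (in_Z2 _ (bs_conj_refl _)).
  have class_w : conj_class (m%:~R, 0) = conj_class (eval w) by rewrite ew conj_class_mul2X.
  have len_m := class_length_conj_class (esym class_w) len_w.
  exists m => //; rewrite mem_reps m_red.
  by rewrite (class_length_uniq (class_length_reduced m_red) len_m) eqxx.
rewrite mem_reps => /andP [m_red /eqP <-] <-.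
exists (apow m); rewrite eval_apow; split=> //; split; last exact: class_length_reduced.
by move=> h /bs_conj_Z2 [k ->].
Qed.

Lemma conj_class_reduced_inj m m' : reduced m -> reduced m' ->
  conj_class (m%:~R, 0) = conj_class (m'%:~R, 0) -> m = m'.
Proof.
move=> m_red m'_red E.
have /bs_conj_Z2 [k [ek]] : conj_class (m%:~R, 0) (m'%:~R, 0) by rewrite E; apply: bs_conj_refl.
exact: reduced_mul2X_inj m_red m'_red (esym ek).
Qed.

Lemma has_card_classes n : has_card (classes_in_Z2_of_length n) (c0 n).
Proof.
apply: has_card_seq (reps_uniq n) _ (classes_in_Z2_of_lengthP n).
move=> m m'; rewrite !mem_reps => /andP [m_red _] /andP [m'_red _].
exact: conj_class_reduced_inj.
Qed.

Lemma rational_series_rec (c : nat -> nat) (Q : {poly int}) (N : nat) : Q != 0 ->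
  (forall n, (N <= n)%N -> \sum_(i < n.+1) Q`_i * (c (n - i)%N)%:Z = 0) -> rational_series c.
Proof.
move=> Q_neq0 rec; exists (\poly_(n < N) \sum_(i < n.+1) Q`_i * (c (n - i)%N)%:Z), Q.
by split=> // n; rewrite coef_poly; case: ltnP => // /rec.
Qed.

Lemma sum_coef_trunc (Q : {poly int}) (a : nat -> int) n m : (size Q <= m <= n.+1)%N ->
  \sum_(i < n.+1) Q`_i * a (n - i)%N = \sum_(i < m) Q`_i * a (n - i)%N.
Proof.
move=> /andP [sQ mn]; rewrite (big_ord_widen _ (fun i => Q`_i * a (n - i)%N) mn).
rewrite [RHS]big_mkcond.
by apply: eq_bigr => i _; case: ltnP => // /(leq_trans sQ) ?; rewrite nth_default ?mul0r.
Qed.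

Definition c0_denom : {poly int} := Poly [:: 1; 0; -1; 0; 0; -2].

Lemma c0_denom_rec n : (10 <= n)%N -> \sum_(i < n.+1) c0_denom`_i * (c0 (n - i)%N)%:Z = 0.
Proof.
move=> n_ge10; rewrite (@sum_coef_trunc _ (fun k => (c0 k)%:Z) n 6) ?size_Poly; last by lia.
rewrite !big_ord_recl big_ord0 /= /bump /= !addn0 !add1n !coef_Poly /= subn0 c0_rec //; lia.
Qed.

Theorem proposition3p9 :
  exists c0 : nat -> nat,
    (forall n : nat, has_card (classes_in_Z2_of_length n) (c0 n)) /\
    rational_series c0.
Proof.
exists c0; split; first exact: has_card_classes.
apply: (@rational_series_rec _ c0_denom 10); last exact: c0_denom_rec.
by apply/eqP => /(congr1 (fun p : {poly int} => p`_0)); rewrite coef_Poly coef0.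
Qed.
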